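(* Let $\mathcal M$ and $\mathcal N$ be quantum channels satisfying $s$-detailed balance with respect to $\rho_\beta$. Then $\mathcal M\circ\mathcal N\circ\mathcal M$ also satisfies $s$-detailed balance with respect to $\rho_\beta$. Moreover, if $\mathcal N$ has $\rho_\beta$ as its unique fixed point and its spectrum is contained in $[0,1]$, then $\mathcal M\circ\mathcal N\circ\mathcal M$ also has $\rho_\beta$ as its unique fixed point and its spectrum lies in $[0,1]$.
   Context: Let $H$ be a Hermitian operator on $n$ qubits, $\beta>0$, $\rho_\beta=e^{-\beta H}/\operatorname{tr}(e^{-\beta H})$. A quantum channel is a CPTP map $\mathcal T(X)=\sum_uK_uXK_u^\dagger$ with dual $\mathcal T^\dagger(X)=\sum_uK_u^\dagger XK_u$. For $s\in[0,1]$, $\langle A,B\rangle_s=\operatorname{tr}(A^\dagger\rho_\beta^{1-s}B\rho_\beta^s)$; $\mathcal T$ satisfies $s$-detailed balance w.r.t. $\rho_\beta$ if $\langle A,\mathcal T^\dagger(B)\rangle_s=\langle\mathcal T^\dagger(A),B\rangle_s$ for all matrices $A,B$. Spectrum = set of eigenvalues of the channel as a linear map on $2^n\times2^n$ matrices; a fixed point is a state $\sigma$ with $\mathcal T(\sigma)=\sigma$. *)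

From HB Require Import structures.
From mathcomp Require Import all_boot all_order all_algebra.
From mathcomp Require Import sesquilinear spectral.
From mathcomp Require Import complex.
From mathcomp Require Import reals sequences exp.
Set Implicit Arguments. Unset Strict Implicit. Unset Printing Implicit Defensive.
Import Order.TTheory GRing.Theory Num.Theory Num.Def.
Local Open Scope ring_scope.
Local Open Scope complex_scope.

Section QDefs.
Variable R : realType.
Local Notation C := R[i].

Definition dag m k (A : 'M[C]_(m, k)) : 'M[C]_(k, m) := (map_mx conjC A)^T.

(* f(A) for a Hermitian matrix A and a real function f, via the library's
   spectral decomposition A = P^-1 diag(d) P (P unitary, d real). *)
Definition hermfun (f : R -> R) k (A : 'M[C]_k) : 'M[C]_k :=
  invmx (spectralmx A)
  *m diag_mx (\row_i (f (complex.Re (spectral_diag A 0 i)))%:C)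
  *m spectralmx A.

Definition mxexp k (A : 'M[C]_k) := hermfun (@expR R) A.
Definition mxpowr k (A : 'M[C]_k) (t : R) := hermfun (fun x => x `^ t) A.

Definition gibbs k (beta : R) (H : 'M[C]_k) : 'M[C]_k :=
  (\tr (mxexp (- (beta%:C) *: H)))^-1 *: mxexp (- (beta%:C) *: H).

Definition sinner k (s : R) (rho A B : 'M[C]_k) : C :=
  \tr (dag A *m mxpowr rho (1 - s) *m B *m mxpowr rho s).

Definition kraus_map k (Ks : seq 'M[C]_k) (X : 'M[C]_k) : 'M[C]_k :=
  \sum_(K <- Ks) K *m X *m dag K.
Definition kraus_dual k (Ks : seq 'M[C]_k) (X : 'M[C]_k) : 'M[C]_k :=
  \sum_(K <- Ks) dag K *m X *m K.

(* quantum channel: CPTP map, i.e. Kraus form with sum K^dagger K = 1 *)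
Definition is_channel k (T : 'M[C]_k -> 'M[C]_k) : Prop :=
  exists Ks : seq 'M[C]_k,
    \sum_(K <- Ks) dag K *m K = 1%:M /\ forall X, T X = kraus_map Ks X.

(* s-detailed balance: <A, T^dagger B>_s = <T^dagger A, B>_s, where
   T^dagger is the dual computed from a Kraus representation of T (the dual
   does not depend on the chosen Kraus representation). *)
Definition detailed_balance k (s : R) (rho : 'M[C]_k)
  (T : 'M[C]_k -> 'M[C]_k) : Prop :=
  exists Ks : seq 'M[C]_k, (forall X, T X = kraus_map Ks X) /\
    forall A B, sinner s rho A (kraus_dual Ks B) = sinner s rho (kraus_dual Ks A) B.

Definition is_psd k (A : 'M[C]_k) : Prop :=
  A \is hermsymmx /\ forall v : 'rV[C]_k, 0 <= (v *m A *m dag v) 0 0.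
Definition is_state k (A : 'M[C]_k) : Prop := is_psd A /\ \tr A = 1.

Definition unique_fixed_point k (T : 'M[C]_k -> 'M[C]_k) (sigma : 'M[C]_k) :=
  is_state sigma /\ T sigma = sigma /\
  forall tau, is_state tau -> T tau = tau -> tau = sigma.

Definition spectrum_in01 k (T : 'M[C]_k -> 'M[C]_k) : Prop :=
  forall (mu : C) (X : 'M[C]_k), X != 0 -> T X = mu *: X -> 0 <= mu <= 1.

End QDefs.

From HB Require Import structures.
From mathcomp Require Import all_boot all_order all_algebra.
From mathcomp Require Import sesquilinear spectral.
From mathcomp Require Import complex.
From mathcomp Require Import reals sequences exp.
From mathcomp Require Import ring.
Import Order.TTheory GRing.Theory Num.Theory.
Local Open Scope ring_scope.
Set Implicit Arguments. Unset Strict Implicit. Unset Printing Implicit Defensive.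

(* Let <A, B>_s = tr(A^dag rho^(1-s) B rho^s), a positive definite inner product
   since rho = gibbs beta H is positive definite. s-detailed balance of T says that
   the dual T^dag is self-adjoint for it, so that Gamma (T^dag B) = T (Gamma B) with
   Gamma Y = rho^(1-s) Y rho^s; composing Kraus representations gives the first
   claim. A self-adjoint T^dag is diagonal in an orthonormal basis (the coordinates
   Y |-> vec(rho^((1-s)/2) Y rho^(s/2))), so its quadratic form is controlled by its
   eigenvalues. Those of N^dag lie in [0, 1], being eigenvalues of N through Gamma;
   those of M^dag have modulus at most 1 by the Kadison-Schwarz inequality
   tr(M^dag W rho (M^dag W)^dag) <= tr(W rho W^dag), which uses M rho = rho. Hence
   <Y, M^dag N^dag M^dag Y> = <M^dag Y, N^dag M^dag Y> lies between 0 and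
   <M^dag Y, M^dag Y> <= <Y, Y>, which bounds the spectrum of M o N o M. For a fixed
   point equality holds throughout, which forces N^dag (M^dag Y) = M^dag Y and
   M^dag (M^dag Y) = Y; then Gamma (M^dag Y) is fixed by N, hence a multiple of rho,
   and so is the fixed point. *)

Section Adjoint.
Variable R : realType.
Local Notation C := R[i].

Lemma dag_trC m p (A : 'M[C]_(m, p)) : dag A = (A ^t*)%sesqui.
Proof. by rewrite /dag map_trmx. Qed.

Lemma dagK m p (A : 'M[C]_(m, p)) : dag (dag A) = A.
Proof. by apply/matrixP => i j; rewrite !mxE conjCK. Qed.

Lemma dagM m p q (A : 'M[C]_(m, p)) (B : 'M[C]_(p, q)) :
  dag (A *m B) = dag B *m dag A.
Proof. by rewrite /dag map_mxM trmx_mul. Qed.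

Lemma dagD m p (A B : 'M[C]_(m, p)) : dag (A + B) = dag A + dag B.
Proof. by apply/matrixP => i j; rewrite !mxE rmorphD. Qed.

Lemma dagB m p (A B : 'M[C]_(m, p)) : dag (A - B) = dag A - dag B.
Proof. by apply/matrixP => i j; rewrite !mxE rmorphB. Qed.

Lemma dagZ m p a (A : 'M[C]_(m, p)) : dag (a *: A) = a^* *: dag A.
Proof. by apply/matrixP => i j; rewrite !mxE rmorphM. Qed.

Lemma dag_sum k (I : Type) (r : seq I) (F : I -> 'M[C]_k) :
  dag (\sum_(i <- r) F i) = \sum_(i <- r) dag (F i).
Proof.
elim: r => [|a r IH]; last by rewrite !big_cons dagD IH.
by rewrite !big_nil; apply/matrixP => i j; rewrite !mxE rmorph0.
Qed.

Lemma dotmx_dagE m (u v : 'rV[C]_m) : dotmx u v = (u *m dag v) 0 0.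
Proof. by rewrite dotmxE dag_trC. Qed.

Lemma mxtrace_mul_inj k (A B : 'M[C]_k) :
  (forall X, \tr (X *m A) = \tr (X *m B)) -> A = B.
Proof.
move=> eqAB; apply/matrixP => i j.
have trE Y : \tr (delta_mx j i *m Y) = Y i j.
  rewrite /mxtrace (bigD1 j) //= big1 ?addr0 => [|l /negbTE ne_lj].
    rewrite mxE (bigD1 i) //= big1 ?addr0; first by rewrite mxE !eqxx mul1r.
    by move=> l /negbTE ne_li; rewrite mxE ne_li andbF mul0r.
  by rewrite mxE big1 // => p _; rewrite mxE ne_lj mul0r.
by rewrite -!trE eqAB.
Qed.

End Adjoint.

Section Kraus.
Variables (R : realType) (k : nat).
Local Notation C := R[i].
Implicit Types (Ks : seq 'M[C]_k) (X Y : 'M[C]_k).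

Fact kraus_map_is_linear Ks : linear (kraus_map Ks).
Proof.
move=> a X Y; rewrite /kraus_map scaler_sumr -big_split; apply: eq_bigr => K _.
by rewrite mulmxDr mulmxDl -scalemxAr -scalemxAl.
Qed.
HB.instance Definition _ Ks := GRing.isLinear.Build C 'M[C]_k 'M[C]_k *:%R
  (kraus_map Ks) (kraus_map_is_linear Ks).

Fact kraus_dual_is_linear Ks : linear (kraus_dual Ks).
Proof.
move=> a X Y; rewrite /kraus_dual scaler_sumr -big_split; apply: eq_bigr => K _.
by rewrite mulmxDr mulmxDl -scalemxAr -scalemxAl.
Qed.
HB.instance Definition _ Ks := GRing.isLinear.Build C 'M[C]_k 'M[C]_k *:%R
  (kraus_dual Ks) (kraus_dual_is_linear Ks).

Lemma kraus_map_dag Ks X : kraus_map Ks (dag X) = dag (kraus_map Ks X).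
Proof.
by rewrite /kraus_map dag_sum; apply: eq_bigr => K _; rewrite !dagM dagK mulmxA.
Qed.

Lemma kraus_dual_dag Ks X : kraus_dual Ks (dag X) = dag (kraus_dual Ks X).
Proof.
by rewrite /kraus_dual dag_sum; apply: eq_bigr => K _; rewrite !dagM dagK mulmxA.
Qed.

Lemma kraus_dual1 Ks : \sum_(K <- Ks) dag K *m K = 1%:M -> kraus_dual Ks 1%:M = 1%:M.
Proof. by move=> TP; rewrite -[RHS]TP; apply: eq_bigr => K _; rewrite mulmx1. Qed.

Lemma mxtrace_kraus_dual Ks X Y :
  \tr (kraus_dual Ks X *m Y) = \tr (X *m kraus_map Ks Y).
Proof.
rewrite mulmx_suml mulmx_sumr !raddf_sum; apply: eq_bigr => K _ /=.
by rewrite !mulmxA [RHS]mxtrace_mulC !mulmxA.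
Qed.

Lemma kraus_dual_unique Ks Ks' :
  (forall X, kraus_map Ks X = kraus_map Ks' X) ->
  forall Y, kraus_dual Ks Y = kraus_dual Ks' Y.
Proof.
move=> eqKs Y; apply: mxtrace_mul_inj => X.
by rewrite mxtrace_mulC mxtrace_kraus_dual eqKs -mxtrace_kraus_dual mxtrace_mulC.
Qed.

Definition kraus_comp Ks Ks' := [seq A *m B | A <- Ks, B <- Ks'].

Lemma kraus_map_comp Ks Ks' X :
  kraus_map (kraus_comp Ks Ks') X = kraus_map Ks (kraus_map Ks' X).
Proof.
rewrite /kraus_map big_allpairs_dep /=; apply: eq_bigr => A _.
rewrite mulmx_sumr mulmx_suml; apply: eq_bigr => B _.
by rewrite dagM !mulmxA.
Qed.

Lemma kraus_dual_comp Ks Ks' X :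
  kraus_dual (kraus_comp Ks Ks') X = kraus_dual Ks' (kraus_dual Ks X).
Proof.
rewrite /kraus_dual big_allpairs_dep /= exchange_big /=; apply: eq_bigr => B _.
rewrite mulmx_sumr mulmx_suml; apply: eq_bigr => A _.
by rewrite dagM !mulmxA.
Qed.

Lemma detailed_balance_sandwich (s : R) (rho : 'M[C]_k) (M N : 'M[C]_k -> 'M[C]_k) :
  detailed_balance s rho M -> detailed_balance s rho N ->
  detailed_balance s rho (fun X => M (N (M X))).
Proof.
move=> [KM [eM dbM]] [KN [eN dbN]].
exists (kraus_comp KM (kraus_comp KN KM)); split => [X|A B].
  by rewrite !kraus_map_comp -eM -eN -eM.
by rewrite !kraus_dual_comp dbM dbN dbM.
Qed.

Definition sinner_selfadjoint (s : R) (rho : 'M[C]_k) (D : 'M[C]_k -> 'M[C]_k) :=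
  forall A B, sinner s rho A (D B) = sinner s rho (D A) B.

Lemma channel_detailed_balance_kraus (s : R) (rho : 'M[C]_k) (T : 'M[C]_k -> 'M[C]_k) :
  is_channel T -> detailed_balance s rho T ->
  exists Ks, [/\ \sum_(K <- Ks) dag K *m K = 1%:M, forall X, T X = kraus_map Ks X
               & sinner_selfadjoint s rho (kraus_dual Ks)].
Proof.
move=> [Ks [TP eT]] [Ks' [eT' db]]; exists Ks; split; [exact: TP | exact: eT | move=> A B].
have eqdual := kraus_dual_unique (fun X => etrans (esym (eT' X)) (eT X)).
by rewrite -!eqdual db.
Qed.

End Kraus.

Section UnitaryDiagonal.
Variables (R : realType) (m : nat).
Local Notation C := R[i].
Implicit Types (c e v : 'rV[C]_m).

Lemma unitary_dag_mulmx (P : 'M[C]_m) : P \is unitarymx ->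
  P *m dag P = 1%:M /\ dag P *m P = 1%:M.
Proof. by move=> /unitarymxP; rewrite -dag_trC => PPd; split; last exact: mulmx1C. Qed.

Lemma dotmx_diag c e : dotmx (c *m diag_mx e) c = \sum_i e 0 i * `|c 0 i| ^+ 2.
Proof.
rewrite dotmx_dagE mxE; apply: eq_bigr => i _.
by rewrite mul_mx_diag !mxE normCK [c 0 i * _]mulrC -mulrA.
Qed.

Lemma dotmx_normE c : dotmx c c = \sum_i `|c 0 i| ^+ 2.
Proof.
by rewrite dotmx_dagE mxE; apply: eq_bigr => i _; rewrite !mxE normCK.
Qed.

Lemma sum_weighted_le (w x : 'I_m -> C) :
  (forall i, w i <= 1) -> (forall i, 0 <= x i) ->
  \sum_i w i * x i <= \sum_i x i /\
  (\sum_i x i <= \sum_i w i * x i -> forall i, w i * x i = x i).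
Proof.
move=> w_le1 x_ge0; have le_wx i : w i * x i <= x i by rewrite ler_piMl.
split=> [|ge_sum i]; first exact: ler_sum.
have eq_sum : \sum_i w i * x i = \sum_i x i by apply: le_anti; rewrite ge_sum ler_sum.
have sum0 : \sum_j (x j - w j * x j) = 0 by rewrite sumrB eq_sum subrr.
apply/eqP; rewrite eq_sym -subr_eq0; apply/eqP.
by apply: (psumr_eq0P _ sum0) => // j _; rewrite subr_ge0.
Qed.

Variables (P : 'M[C]_m) (e : 'rV[C]_m).
Hypothesis P_unitary : P \is unitarymx.
Local Notation F := (dag P *m diag_mx e *m P).

Lemma dotmx_unitary_diag v :
  dotmx (v *m F) v = \sum_i e 0 i * `|(v *m dag P) 0 i| ^+ 2.
Proof.
by rewrite -dotmx_diag !dotmx_dagE dagM dagK !mulmxA.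
Qed.

Lemma dotmx_unitaryE v : dotmx v v = \sum_i `|(v *m dag P) 0 i| ^+ 2.
Proof.
have [_ PdP] := unitary_dag_mulmx P_unitary.
by rewrite -dotmx_normE !dotmx_dagE dagM dagK mulmxA -[v *m _ *m _]mulmxA PdP mulmx1.
Qed.

Lemma unitary_diag_form_lb a : (forall i, a <= e 0 i) ->
  forall v, a * dotmx v v <= dotmx (v *m F) v.
Proof.
move=> a_le v; rewrite dotmx_unitary_diag dotmx_unitaryE mulr_sumr.
by apply: ler_sum => i _; rewrite ler_wpM2r ?exprn_ge0.
Qed.

Lemma unitary_diag_form_le : (forall i, e 0 i <= 1) ->
  forall v, dotmx (v *m F) v <= dotmx v v /\
            (dotmx v v <= dotmx (v *m F) v -> v *m F = v).
Proof.
move=> e_le1 v; rewrite dotmx_unitary_diag dotmx_unitaryE.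
have [le_sum eq_sum] := sum_weighted_le (x := fun i => `|(v *m dag P) 0 i| ^+ 2)
  e_le1 (fun i => exprn_ge0 2 (normr_ge0 _)).
split=> // /eq_sum fixed; have [_ PdP] := unitary_dag_mulmx P_unitary.
rewrite !mulmxA; suff -> : v *m dag P *m diag_mx e = v *m dag P by rewrite -mulmxA PdP mulmx1.
apply/rowP => i; rewrite mul_mx_diag mxE.
have /orP[/eqP -> | /eqP ->] : (e 0 i == 1) || ((v *m dag P) 0 i == 0).
  move/eqP: (fixed i); rewrite -subr_eq0 -[X in _ - X]mul1r -mulrBl mulf_eq0.
  by rewrite subr_eq0 sqrf_eq0 normr_eq0.
by rewrite mulr1.
by rewrite mul0r.
Qed.

End UnitaryDiagonal.

Section HermitianSpectral.
Variables (R : realType) (m : nat) (A : 'M[R[i]]_m).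
Local Notation P := (spectralmx A).
Local Notation d := (spectral_diag A).

Lemma hermitianE : (A \is hermsymmx) = (dag A == A).
Proof. by rewrite is_hermitianmxE expr0 scale1r dag_trC eq_sym. Qed.

Lemma spectral_row_neq0 i : row i P != 0.
Proof.
apply: contra_eqN (row_unitarymxP (spectral_unitarymx A) i i) => /eqP ->.
by rewrite linear0l eqxx eq_sym pnatr_eq0.
Qed.

Hypothesis A_herm : A \is hermsymmx.

Lemma hermitian_spectralE : A = dag P *m diag_mx d *m P.
Proof.
have /orthomx_spectralP AE := hermitian_normalmx A_herm.
by rewrite dag_trC -invmx_unitary ?spectral_unitarymx.
Qed.

Lemma hermitian_spectral_eigen i : row i P *m A = d 0 i *: row i P.
Proof.
have [PPd _] := unitary_dag_mulmx (spectral_unitarymx A).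
rewrite [X in _ *m X = _]hermitian_spectralE rowE !mulmxA -(mulmxA _ P) PPd mulmx1.
by rewrite -rowE row_diag_mx -scalemxAl.
Qed.

Lemma hermitian_spectral_real i : d 0 i \is Num.real.
Proof. exact: mxOverP (hermitian_spectral_diag_real A_herm) 0 i. Qed.

Lemma hermitian_form_lb :
  exists2 L, 0 <= L & forall v : 'rV_m, - L * dotmx v v <= dotmx (v *m A) v.
Proof.
exists (\sum_i `|d 0 i|) => [|v]; first exact: sumr_ge0.
rewrite [X in dotmx (v *m X)]hermitian_spectralE.
apply: unitary_diag_form_lb; first exact: spectral_unitarymx.
move=> i; apply: real_lerNnormlW; first exact: hermitian_spectral_real.
by rewrite (bigD1 i) //= lerDl sumr_ge0.
Qed.

Lemma hermitian_form_le :
  (forall mu (v : 'rV_m), v != 0 -> v *m A = mu *: v -> 0 <= mu <= 1) ->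
  forall v : 'rV_m, 0 <= dotmx (v *m A) v <= dotmx v v /\
            (dotmx v v <= dotmx (v *m A) v -> v *m A = v).
Proof.
move=> spec v; have d01 i : 0 <= d 0 i <= 1.
  exact: spec (spectral_row_neq0 i) (hermitian_spectral_eigen i).
have [le_v eq_v] := unitary_diag_form_le (spectral_unitarymx A) (fun i => (andP (d01 i)).2) v.
have ge0_v := unitary_diag_form_lb (spectral_unitarymx A) (fun i => (andP (d01 i)).1) v.
rewrite -hermitian_spectralE mul0r in le_v eq_v ge0_v.
by split=> //; apply/andP.
Qed.

Lemma hermitian_form_contraction :
  (forall mu (v : 'rV_m), v != 0 -> v *m A = mu *: v -> mu * mu^* <= 1) ->
  forall v : 'rV_m, dotmx (v *m A) (v *m A) <= dotmx v v /\
            (dotmx v v <= dotmx (v *m A) (v *m A) -> v *m A *m A = v).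
Proof.
move=> spec v; have d2_le1 i : d 0 i * d 0 i <= 1.
  have := spec _ _ (spectral_row_neq0 i) (hermitian_spectral_eigen i).
  by rewrite conj_Creal // hermitian_spectral_real.
have [PPd _] := unitary_dag_mulmx (spectral_unitarymx A).
have sqrE : A *m A = dag P *m diag_mx (\row_i (d 0 i * d 0 i)) *m P.
  rewrite [in LHS]hermitian_spectralE !mulmxA -(mulmxA _ P) PPd mulmx1.
  by rewrite -(mulmxA (dag P)) mulmx_diag.
have := unitary_diag_form_le (spectral_unitarymx A) (e := \row_i (d 0 i * d 0 i)) _ v.
rewrite -sqrE -mulmxA.
have -> : dotmx (v *m (A *m A)) v = dotmx (v *m A) (v *m A).
  by rewrite !dotmx_dagE dagM (eqP (etrans (esym hermitianE) A_herm)) !mulmxA.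
by apply => i; rewrite mxE.
Qed.

End HermitianSpectral.

(* The witness (1 + \sum_i (x i)^-1)^-1 avoids taking a minimum in a field that is
   only partially ordered. *)
Lemma finite_pos_lb (F : numFieldType) m (x : 'I_m -> F) :
  (forall i, 0 < x i) -> exists2 a, 0 < a & forall i, a <= x i.
Proof.
move=> x_gt0; pose S := \sum_i (x i)^-1 + 1.
have S_gt0 : 0 < S by rewrite ltr_wpDl // sumr_ge0 // => i _; rewrite invr_ge0 ltW.
exists S^-1 => [|i]; first by rewrite invr_gt0.
rewrite -[x i]invrK lef_pV2 ?posrE ?invr_gt0 // /S (bigD1 i) //= -addrA lerDl.
by rewrite addr_ge0 // sumr_ge0 // => j _; rewrite invr_ge0 ltW.
Qed.

Section Hermfun.
Variables (R : realType) (m : nat).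
Local Notation C := R[i].

Definition posdefmx (A : 'M[C]_m) := forall v : 'rV_m, v != 0 -> 0 < dotmx (v *m A) v.

Lemma unitary_diag_posdef (P : 'M[C]_m) (e : 'rV[C]_m) : P \is unitarymx ->
  (forall i, 0 < e 0 i) -> posdefmx (dag P *m diag_mx e *m P).
Proof.
move=> P_unitary e_gt0 v v_neq0; have [a a_gt0 le_a] := finite_pos_lb e_gt0.
apply: lt_le_trans (unitary_diag_form_lb P_unitary le_a v).
by rewrite mulr_gt0 // dnorm_gt0.
Qed.

Variable A : 'M[C]_m.
Local Notation P := (spectralmx A).
Local Notation d := (spectral_diag A).
Implicit Types f g : R -> R.

Lemma hermfunE f :
  hermfun f A = dag P *m diag_mx (\row_i (f (complex.Re (d 0 i)))%:C%C) *m P.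
Proof. by rewrite /hermfun dag_trC -invmx_unitary ?spectral_unitarymx. Qed.

Lemma hermfun_hermitian f : hermfun f A \is hermsymmx.
Proof.
rewrite hermitianE hermfunE !dagM dagK mulmxA; apply/eqP; congr (_ *m _ *m _).
rewrite /dag (map_diag_mx (@Num.conj_op C)) tr_diag_mx; congr diag_mx.
by apply/rowP => i; rewrite !mxE; apply: conj_Creal; apply/complex_realP; eexists.
Qed.

Lemma hermfunM f g : hermfun f A *m hermfun g A = hermfun (fun x => f x * g x) A.
Proof.
have [PPd _] := unitary_dag_mulmx (spectral_unitarymx A).
rewrite !hermfunE !mulmxA -(mulmxA _ P) PPd mulmx1 -(mulmxA (dag P)) mulmx_diag.
by congr (_ *m diag_mx _ *m _); apply/rowP => i; rewrite !mxE rmorphM.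
Qed.

Lemma eq_hermfun f g : (forall i, f (complex.Re (d 0 i)) = g (complex.Re (d 0 i))) ->
  hermfun f A = hermfun g A.
Proof.
move=> eq_fg; rewrite !hermfunE; congr (_ *m diag_mx _ *m _).
by apply/rowP => i; rewrite !mxE eq_fg.
Qed.

Lemma hermfun1 : hermfun (fun=> 1) A = 1%:M.
Proof.
have [_ PdP] := unitary_dag_mulmx (spectral_unitarymx A).
rewrite hermfunE -PdP; congr (_ *m _); rewrite -[RHS]mulmx1 -diag_const_mx.
by congr (_ *m diag_mx _); apply/rowP => i; rewrite !mxE.
Qed.

Lemma mxtrace_hermfun f : \tr (hermfun f A) = \sum_i (f (complex.Re (d 0 i)))%:C%C.
Proof.
have [PPd _] := unitary_dag_mulmx (spectral_unitarymx A).
rewrite hermfunE mxtrace_mulC mulmxA PPd mul1mx mxtrace_diag.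
by apply: eq_bigr => i _; rewrite mxE.
Qed.

Lemma hermfun_posdef f : (forall x, 0 < f x) -> posdefmx (hermfun f A).
Proof.
move=> f_gt0; rewrite hermfunE; apply: unitary_diag_posdef; first exact: spectral_unitarymx.
by move=> i; rewrite mxE ltcE /= eqxx f_gt0.
Qed.

Hypothesis A_herm : A \is hermsymmx.

Lemma hermfun_id : hermfun id A = A.
Proof.
rewrite hermfunE [in RHS](hermitian_spectralE A_herm); congr (_ *m diag_mx _ *m _).
by apply/rowP => i; rewrite mxE RRe_real // hermitian_spectral_real.
Qed.

Hypothesis A_posdef : posdefmx A.

Lemma posdef_spectral_gt0 i : 0 < complex.Re (d 0 i).
Proof.
have := A_posdef (spectral_row_neq0 A i).
rewrite hermitian_spectral_eigen // dotmx_dagE -scalemxAl mxE -dotmx_dagE.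
rewrite (row_unitarymxP (spectral_unitarymx A) i i) eqxx mulr1.
by rewrite ltcE => /andP[_].
Qed.

Lemma posdef_lb : exists2 a, 0 < a & forall v, a * dotmx v v <= dotmx (v *m A) v.
Proof.
have d_gt0 i : 0 < d 0 i.
  by rewrite -(RRe_real (hermitian_spectral_real A_herm i)) ltcE /= eqxx posdef_spectral_gt0.
have [a a_gt0 le_a] := finite_pos_lb d_gt0; exists a => // v.
rewrite [X in dotmx (v *m X)](hermitian_spectralE A_herm).
by apply: unitary_diag_form_lb; first exact: spectral_unitarymx.
Qed.

Lemma mxpowrD a b : mxpowr A a *m mxpowr A b = mxpowr A (a + b).
Proof.
rewrite /mxpowr hermfunM; apply: eq_hermfun => i.
by rewrite powRD ?(gt_eqF (posdef_spectral_gt0 i)) ?implybT.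
Qed.

Lemma mxpowr0 : mxpowr A 0 = 1%:M.
Proof. by rewrite -hermfun1; apply: eq_hermfun => i; rewrite powRr0. Qed.

Lemma mxpowr_cancel a b : a + b = 0 -> mxpowr A a *m mxpowr A b = 1%:M.
Proof. by move=> ab0; rewrite mxpowrD ab0 mxpowr0. Qed.

Lemma mxpowr1 : mxpowr A 1 = A.
Proof.
by rewrite -[RHS]hermfun_id; apply: eq_hermfun => i; rewrite powRr1 // ltW ?posdef_spectral_gt0.
Qed.

Lemma mxpowr_dag t : dag (mxpowr A t) = mxpowr A t.
Proof. by apply/eqP; rewrite -hermitianE hermfun_hermitian. Qed.

End Hermfun.

Section DotmxBasis.
Variables (R : realType) (m : nat).
Local Notation C := R[i].

Lemma dotmx_deltar (u : 'rV[C]_m) i : dotmx u (delta_mx 0 i) = u 0 i.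
Proof.
rewrite dotmx_dagE mxE (bigD1 i) //= big1 ?addr0 => [|j /negbTE neq_ji].
  by rewrite !mxE !eqxx conjC1 mulr1.
by rewrite !mxE neq_ji andbF conjC0 mulr0.
Qed.

Lemma dotmx_deltal (u : 'rV[C]_m) i : dotmx (delta_mx 0 i) u = (u 0 i)^*.
Proof.
rewrite dotmx_dagE mxE (bigD1 i) //= big1 ?addr0 => [|j /negbTE neq_ji].
  by rewrite !mxE !eqxx mul1r.
by rewrite !mxE neq_ji andbF mul0r.
Qed.

Lemma dotmxZl a (u v : 'rV[C]_m) : dotmx (a *: u) v = a * dotmx u v.
Proof. by rewrite !dotmx_dagE -scalemxAl mxE. Qed.

Lemma lin1_mx_hermitian (f : {linear 'rV[C]_m -> 'rV[C]_m}) :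
  (forall u v, dotmx (f u) v = dotmx u (f v)) -> lin1_mx f \is hermsymmx.
Proof.
move=> sym; rewrite hermitianE; apply/eqP/matrixP => i j.
have := sym (delta_mx 0 j) (delta_mx 0 i).
by rewrite dotmx_deltar dotmx_deltal !mxE => ->; rewrite conjCK.
Qed.

Lemma dotmx_mxvec p (X Y : 'M[C]_p) : dotmx (mxvec Y) (mxvec X) = \tr (dag X *m Y).
Proof.
rewrite dotmx_dagE mxE (reindex (uncurry (@mxvec_index p p))) /=; last first.
  exact: curry_mxvec_bij.
transitivity (\sum_(q : 'I_p * 'I_p) Y q.1 q.2 * (X q.1 q.2)^*).
  by apply: eq_bigr => [[i j]] _ /=; rewrite !mxE !mxvecE.
rewrite -(pair_bigA _ (fun i j => Y i j * (X i j)^*)) /mxtrace exchange_big /=.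
apply: eq_bigr => i _; rewrite mxE; apply: eq_bigr => j _.
by rewrite !mxE mulrC.
Qed.

End DotmxBasis.

Section Sandwich.
Variables (R : realType) (k : nat).
Local Notation C := R[i].
Implicit Types P Q A B Y : 'M[C]_k.

Definition sandwich P Q Y := P *m Y *m Q.

Fact sandwich_is_linear P Q : linear (sandwich P Q).
Proof. by move=> a X Y; rewrite /sandwich mulmxDr mulmxDl -scalemxAr -scalemxAl. Qed.
HB.instance Definition _ P Q := GRing.isLinear.Build C 'M[C]_k 'M[C]_k *:%R
  (sandwich P Q) (sandwich_is_linear P Q).

Lemma sandwichK P P' Q Q' :
  P' *m P = 1%:M -> Q *m Q' = 1%:M -> cancel (sandwich P Q) (sandwich P' Q').
Proof. by move=> PP QQ Y; rewrite /sandwich !mulmxA PP mul1mx -mulmxA QQ mulmx1. Qed.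

Lemma sandwich1 P Q : sandwich P Q 1%:M = P *m Q.
Proof. by rewrite /sandwich mulmx1. Qed.

Lemma mxtrace_dag_sandwich P Q P2 Q2 A B :
  dag P = P -> dag Q = Q -> P *m P = P2 -> Q *m Q = Q2 ->
  \tr (dag (sandwich P Q A) *m sandwich P Q B) = \tr (dag A *m P2 *m B *m Q2).
Proof.
move=> hP hQ <- <-; rewrite /sandwich !dagM hP hQ mxtrace_mulC !mulmxA.
by rewrite mxtrace_mulC !mulmxA mxtrace_mulC !mulmxA.
Qed.

End Sandwich.

Section SInner.
Variables (R : realType) (k : nat) (rho : 'M[R[i]]_k) (s : R).
Local Notation C := R[i].
Hypotheses (rho_herm : rho \is hermsymmx) (rho_posdef : posdefmx rho).
Local Notation "<< A , B >>" := (sinner s rho A B).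

Definition sgamma := sandwich (mxpowr rho (1 - s)) (mxpowr rho s).
HB.instance Definition _ := GRing.Linear.on sgamma.
Definition sgamma_inv := sandwich (mxpowr rho (s - 1)) (mxpowr rho (- s)).

Definition svec : 'M[C]_k -> 'rV[C]_(k * k) :=
  mxvec \o sandwich (mxpowr rho ((1 - s) / 2)) (mxpowr rho (s / 2)).
HB.instance Definition _ := GRing.Linear.on svec.
Definition svec_inv : 'rV[C]_(k * k) -> 'M[C]_k :=
  sandwich (mxpowr rho (- ((1 - s) / 2))) (mxpowr rho (- (s / 2))) \o vec_mx.
HB.instance Definition _ := GRing.Linear.on svec_inv.

Lemma sinnerE A B : << A, B >> = \tr (dag A *m sgamma B).
Proof. by rewrite /sinner /sgamma /sandwich !mulmxA. Qed.

Lemma sgammaK : cancel sgamma sgamma_inv.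
Proof. by apply: sandwichK; apply: (mxpowr_cancel rho_herm rho_posdef); ring. Qed.

Lemma sgamma_invK : cancel sgamma_inv sgamma.
Proof. by apply: sandwichK; apply: (mxpowr_cancel rho_herm rho_posdef); ring. Qed.

Lemma sgamma_eq0 Y : (sgamma Y == 0) = (Y == 0).
Proof. by rewrite -{1}(linear0 sgamma) (can_eq sgammaK). Qed.

Lemma sgamma1 : sgamma 1%:M = rho.
Proof. by rewrite /sgamma sandwich1 mxpowrD // subrK mxpowr1. Qed.

Lemma sgamma_scalar a : sgamma (a *: 1%:M) = a *: rho.
Proof. by rewrite linearZ /= sgamma1. Qed.

Lemma sgamma_kraus_dual Ks : sinner_selfadjoint s rho (kraus_dual Ks) ->
  forall B, sgamma (kraus_dual Ks B) = kraus_map Ks (sgamma B).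
Proof.
move=> sa B; apply: mxtrace_mul_inj => X.
have := sa (dag X) B; rewrite !sinnerE dagK kraus_dual_dag dagK => ->.
exact: mxtrace_kraus_dual.
Qed.

Lemma selfadjoint_kraus_fixed Ks : \sum_(K <- Ks) dag K *m K = 1%:M ->
  sinner_selfadjoint s rho (kraus_dual Ks) -> kraus_map Ks rho = rho.
Proof. by move=> TP sa; rewrite -sgamma1 -sgamma_kraus_dual // kraus_dual1. Qed.

Lemma svecK : cancel svec svec_inv.
Proof.
move=> Z; rewrite /svec_inv /svec /comp mxvecK.
by apply: sandwichK; apply: (mxpowr_cancel rho_herm rho_posdef); ring.
Qed.

Lemma svec_invK : cancel svec_inv svec.
Proof.
move=> v; rewrite /svec_inv /svec /comp sandwichK ?vec_mxK //.
all: by apply: (mxpowr_cancel rho_herm rho_posdef); ring.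
Qed.

Lemma sinner_svec A B : << A, B >> = dotmx (svec B) (svec A).
Proof.
rewrite /svec /comp dotmx_mxvec.
rewrite (mxtrace_dag_sandwich (P2 := mxpowr rho (1 - s)) (Q2 := mxpowr rho s)) //.
- exact: mxpowr_dag.
- exact: mxpowr_dag.
- by rewrite (mxpowrD rho_herm rho_posdef) -splitr.
- by rewrite (mxpowrD rho_herm rho_posdef) -splitr.
Qed.

Lemma sinner_gt0 Z : Z != 0 -> 0 < << Z, Z >>.
Proof. by rewrite sinner_svec dnorm_gt0 -(linear0 svec) (can_eq svecK). Qed.

Lemma sinnerZr a A B : << A, a *: B >> = a * << A, B >>.
Proof. by rewrite /sinner -scalemxAr -scalemxAl mxtraceZ. Qed.

Definition svec_mx (D : {linear 'M[C]_k -> 'M[C]_k}) := lin1_mx (svec \o D \o svec_inv).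

Section SelfAdjoint.
Variable D : {linear 'M[C]_k -> 'M[C]_k}.
Hypothesis D_sa : sinner_selfadjoint s rho D.

Lemma mul_svec_mx Z : svec Z *m svec_mx D = svec (D Z).
Proof. by rewrite mul_rV_lin1 /= svecK. Qed.

Lemma svec_mx_hermitian : svec_mx D \is hermsymmx.
Proof.
apply: lin1_mx_hermitian => u v /=.
by rewrite -[u in RHS]svec_invK -[v in LHS]svec_invK -!sinner_svec D_sa.
Qed.

Lemma svec_mx_eigen mu v : v != 0 -> v *m svec_mx D = mu *: v ->
  svec_inv v != 0 /\ D (svec_inv v) = mu *: svec_inv v.
Proof.
move=> v_neq0 eig; split.
  by apply: contra v_neq0 => /eqP v0; rewrite -[v]svec_invK v0 linear0.
by apply: (can_inj svecK); rewrite -mul_svec_mx !svec_invK eig linearZ /= svec_invK.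
Qed.

Lemma selfadjoint_form_le :
  (forall mu X, X != 0 -> D X = mu *: X -> 0 <= mu <= 1) ->
  forall Z, 0 <= << Z, D Z >> <= << Z, Z >> /\ (<< Z, Z >> <= << Z, D Z >> -> D Z = Z).
Proof.
move=> spec Z.
have spec_mx mu (v : 'rV_(k * k)) : v != 0 -> v *m svec_mx D = mu *: v -> 0 <= mu <= 1.
  by move=> v_neq0 /(svec_mx_eigen v_neq0)[X_neq0 eigX]; apply: spec X_neq0 eigX.
have [bounds eqZ] := hermitian_form_le svec_mx_hermitian spec_mx (svec Z).
rewrite !sinner_svec -mul_svec_mx; split=> // /eqZ.
by rewrite mul_svec_mx => /(can_inj svecK).
Qed.

Lemma selfadjoint_form_contraction :
  (forall mu X, X != 0 -> D X = mu *: X -> mu * mu^* <= 1) ->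
  forall Z, << D Z, D Z >> <= << Z, Z >> /\ (<< Z, Z >> <= << D Z, D Z >> -> D (D Z) = Z).
Proof.
move=> spec Z.
have spec_mx mu (v : 'rV_(k * k)) : v != 0 -> v *m svec_mx D = mu *: v -> mu * mu^* <= 1.
  by move=> v_neq0 /(svec_mx_eigen v_neq0)[X_neq0 eigX]; apply: spec X_neq0 eigX.
have [bound eqZ] := hermitian_form_contraction svec_mx_hermitian spec_mx (svec Z).
rewrite !sinner_svec -mul_svec_mx; split=> // /eqZ.
by rewrite !mul_svec_mx => /(can_inj svecK).
Qed.

End SelfAdjoint.

End SInner.

Section KadisonSchwarz.
Variables (R : realType) (k : nat) (rho : 'M[R[i]]_k).
Local Notation C := R[i].
Hypothesis rho_posdef : posdefmx rho.

Lemma mxtrace_mul_dag_rows p (W : 'M[C]_(p, k)) (A : 'M[C]_k) :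
  \tr (W *m A *m dag W) = \sum_i dotmx (row i W *m A) (row i W).
Proof.
apply: eq_bigr => i _; rewrite dotmx_dagE -!row_mul !mxE.
by apply: eq_bigr => j _; rewrite !mxE.
Qed.

Lemma posdef_dotmx_ge0 v : 0 <= dotmx (v *m rho) v.
Proof. by have [->|/rho_posdef/ltW //] := eqVneq v 0; rewrite mul0mx linear0l. Qed.

Lemma mxtrace_posdef_ge0 p (W : 'M[C]_(p, k)) : 0 <= \tr (W *m rho *m dag W).
Proof. by rewrite mxtrace_mul_dag_rows sumr_ge0 // => i _; apply: posdef_dotmx_ge0. Qed.

Lemma mxtrace_posdef_gt0 p (W : 'M[C]_(p, k)) : W != 0 -> 0 < \tr (W *m rho *m dag W).
Proof.
move=> W_neq0; have [i row_neq0] : exists i, row i W != 0.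
  apply/existsP; apply: contraR W_neq0 => /existsPn rows0; apply/eqP/row_matrixP => i.
  by rewrite row0; apply/eqP; have := rows0 i; rewrite negbK.
rewrite mxtrace_mul_dag_rows (bigD1 i) //= ltr_wpDr ?rho_posdef //.
by apply: sumr_ge0 => j _; apply: posdef_dotmx_ge0.
Qed.

Section KrausDual.
Variable Ks : seq 'M[C]_k.
Hypothesis Ks_tp : \sum_(K <- Ks) dag K *m K = 1%:M.
Local Notation D := (kraus_dual Ks).

Lemma kraus_dual_schwarz_defect W :
  \sum_(K <- Ks) dag (W *m K - K *m D W) *m (W *m K - K *m D W) =
  D (dag W *m W) - dag (D W) *m D W.
Proof.
set Z := D W.
have expandK K : dag (W *m K - K *m Z) *m (W *m K - K *m Z) =
    (dag K *m (dag W *m W) *m K - dag K *m dag W *m K *m Z) -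
    (dag Z *m (dag K *m W *m K) - dag Z *m (dag K *m K) *m Z).
  by rewrite dagB !dagM mulmxBl !mulmxBr !mulmxA.
rewrite (eq_bigr _ (fun K _ => expandK K)) !sumrB -!mulmx_suml -!mulmx_sumr Ks_tp mulmx1.
by rewrite -kraus_dual_dag subrr subr0.
Qed.

Hypothesis rho_fixed : kraus_map Ks rho = rho.

Lemma kraus_dual_kadison_schwarz W :
  \tr (D W *m rho *m dag (D W)) <= \tr (W *m rho *m dag W).
Proof.
have cyc p (X : 'M[C]_(p, k)) : \tr (X *m rho *m dag X) = \tr (dag X *m X *m rho).
  by rewrite mxtrace_mulC mulmxA.
rewrite -subr_ge0 !cyc -[rho in \tr (dag W *m W *m rho)]rho_fixed -mxtrace_kraus_dual.
rewrite -raddfB -mulmxBl -kraus_dual_schwarz_defect mulmx_suml raddf_sum.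
by apply: sumr_ge0 => K _; rewrite /= -cyc mxtrace_posdef_ge0.
Qed.

Lemma kraus_dual_eigen_norm mu W : W != 0 -> D W = mu *: W -> mu * mu^* <= 1.
Proof.
move=> W_neq0 eigW; have := kraus_dual_kadison_schwarz W.
rewrite eigW dagZ -scalemxAl -scalemxAl -scalemxAr scalerA mxtraceZ.
by rewrite ger_pMl // mxtrace_posdef_gt0.
Qed.

End KrausDual.

End KadisonSchwarz.

Section FixedPoints.
Variables (R : realType) (k : nat) (rho : 'M[R[i]]_k).
Local Notation C := R[i].
Variable T : {linear 'M[C]_k -> 'M[C]_k}.
Hypotheses (rho_posdef : posdefmx rho) (T_rho : unique_fixed_point T rho).
Hypothesis T_dag : forall X, T (dag X) = dag (T X).

(* For large t, W + t rho is positive definite; normalized, it is a fixed state. *)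
Lemma unique_fixed_point_hermitian W :
  W \is hermsymmx -> T W = W -> exists a, W = a *: rho.
Proof.
move=> W_herm TW; have [[[rho_herm _] tr_rho] [T_fix T_uniq]] := T_rho.
have [L L_ge0 W_lb] := hermitian_form_lb W_herm.
have [m m_gt0 rho_lb] := posdef_lb rho_herm rho_posdef.
pose t := L / m + 1; have t_gt0 : 0 < t by rewrite ltr_wpDl ?ltr01 // divr_ge0 // ltW.
pose S := W + t *: rho.
have S_lb v : m * dotmx v v <= dotmx (v *m S) v.
  have -> : dotmx (v *m S) v = dotmx (v *m W) v + t * dotmx (v *m rho) v.
    by rewrite /S mulmxDr -scalemxAr linearDl; congr (_ + _); apply: dotmxZl.
  have -> : m * dotmx v v = - L * dotmx v v + t * (m * dotmx v v).
    by rewrite /t; field; rewrite gt_eqF.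
  by apply: lerD; [apply: W_lb | apply: ler_wpM2l; [exact: ltW | exact: rho_lb]].
have k_gt0 : (0 < k)%N.
  rewrite lt0n; apply/eqP => k0.
  have tr0 : \tr rho = 0 by apply: big1; case=> i i_lt; exfalso; move: i_lt; rewrite k0.
  by move: (oner_neq0 C); rewrite -tr_rho tr0 eqxx.
have S_diag i : m <= S i i.
  have := S_lb (delta_mx 0 i).
  by rewrite -rowE dotmx_deltar dotmx_deltar !mxE !eqxx mulr1.
have trS_gt0 : 0 < \tr S.
  rewrite /mxtrace (bigD1 (Ordinal k_gt0)) //= ltr_wpDr ?(lt_le_trans m_gt0) //.
  by apply: sumr_ge0 => i _; apply: le_trans (S_diag i); apply: ltW.
have S_herm : S \is hermsymmx.
  move: W_herm rho_herm; rewrite !hermitianE /S => /eqP dW /eqP drho.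
  by rewrite dagD dagZ dW drho conj_Creal ?gtr0_real.
pose sigma := (\tr S)^-1 *: S.
have sigma_state : is_state sigma.
  split; [split|].
  - move: S_herm; rewrite !hermitianE /sigma dagZ => /eqP ->.
    by rewrite fmorphV; apply/eqP; congr (_^-1 *: _); apply: conj_Creal; rewrite gtr0_real.
  - move=> v; rewrite -dotmx_dagE -scalemxAr dotmxZl.
    apply: mulr_ge0; first by rewrite invr_ge0 ltW.
    by apply: le_trans _ (S_lb v); rewrite mulr_ge0 ?dnorm_ge0 // ltW.
  - by rewrite mxtraceZ mulVf ?gt_eqF.
have T_S : T S = S by rewrite linearD linearZ /= TW T_fix.
have T_sigma : T sigma = sigma by rewrite linearZ /= T_S.
have S_rho : S = \tr S *: rho.
  by rewrite -(T_uniq _ sigma_state T_sigma) scalerA mulfV ?gt_eqF // scale1r.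
by exists (\tr S - t); rewrite scalerBl -S_rho addrK.
Qed.

Lemma unique_fixed_point_scalar W : T W = W -> exists a, W = a *: rho.
Proof.
move=> TW; have TWd : T (dag W) = dag W by rewrite T_dag TW.
pose Wre := 2^-1 *: (W + dag W); pose Wim := (2 * 'i)^-1 *: (W - dag W).
have conj_half : (2^-1 : C)^* = 2^-1 by rewrite conj_Creal // realV realn.
have conj_halfi : ((2 * 'i)^-1 : C)^* = - (2 * 'i)^-1.
  by rewrite fmorphV rmorphM /= rmorph_nat conjCi mulrN invrN.
have Wre_herm : Wre \is hermsymmx.
  by rewrite hermitianE; apply/eqP; rewrite dagZ dagD dagK conj_half addrC.
have Wim_herm : Wim \is hermsymmx.
  rewrite hermitianE; apply/eqP.
  by rewrite dagZ dagB dagK conj_halfi scaleNr -scalerN opprB.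
have -> : W = Wre + 'i *: Wim.
  apply/matrixP => i j; rewrite !mxE.
  by field; exact: neq0Ci.
have [a ->] : exists a, Wre = a *: rho.
  apply: (unique_fixed_point_hermitian Wre_herm).
  by rewrite linearZ linearD TW TWd.
have [b ->] : exists b, Wim = b *: rho.
  apply: (unique_fixed_point_hermitian Wim_herm).
  by rewrite linearZ linearB TW TWd.
by exists (a + 'i * b); rewrite scalerA -scalerDl.
Qed.

End FixedPoints.

Section SandwichChannel.
Variables (R : realType) (k : nat) (rho : 'M[R[i]]_k) (s : R).
Local Notation C := R[i].
Hypotheses (rho_herm : rho \is hermsymmx) (rho_posdef : posdefmx rho).
Variables (M N : 'M[C]_k -> 'M[C]_k) (KM KN : seq 'M[C]_k).
Hypotheses (KM_tp : \sum_(K <- KM) dag K *m K = 1%:M)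
  (M_kraus : forall X, M X = kraus_map KM X) (N_kraus : forall X, N X = kraus_map KN X)
  (KM_sa : sinner_selfadjoint s rho (kraus_dual KM))
  (KN_sa : sinner_selfadjoint s rho (kraus_dual KN)).
Hypothesis N_spec : spectrum_in01 N.
Local Notation DM := (kraus_dual KM).
Local Notation DN := (kraus_dual KN).
Local Notation "<< A , B >>" := (sinner s rho A B).

Lemma sgamma_sandwich Y : sgamma rho s (DM (DN (DM Y))) = M (N (M (sgamma rho s Y))).
Proof.
rewrite (sgamma_kraus_dual KM_sa) (sgamma_kraus_dual KN_sa) (sgamma_kraus_dual KM_sa).
by rewrite -!M_kraus -N_kraus.
Qed.

Lemma M_fixes_rho : M rho = rho.
Proof. by rewrite M_kraus (selfadjoint_kraus_fixed rho_herm rho_posdef KM_tp KM_sa). Qed.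

Lemma dualM_eigen_norm mu X : X != 0 -> DM X = mu *: X -> mu * mu^* <= 1.
Proof.
move=> X_neq0 eigX; apply: (kraus_dual_eigen_norm rho_posdef KM_tp _ X_neq0 eigX).
by rewrite -M_kraus M_fixes_rho.
Qed.

Lemma dualN_eigen01 mu X : X != 0 -> DN X = mu *: X -> 0 <= mu <= 1.
Proof.
move=> X_neq0 eigX; have N_eig : N (sgamma rho s X) = mu *: sgamma rho s X.
  by rewrite N_kraus -(sgamma_kraus_dual KN_sa) eigX; apply: linearZ.
by apply: N_spec N_eig; rewrite sgamma_eq0.
Qed.

Lemma sandwich_dual_form Y :
  0 <= << Y, DM (DN (DM Y)) >> <= << DM Y, DM Y >> /\ << DM Y, DM Y >> <= << Y, Y >>.
Proof.
rewrite KM_sa; split.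
  by have [] := selfadjoint_form_le rho_herm rho_posdef KN_sa dualN_eigen01 (DM Y).
by have [] := selfadjoint_form_contraction rho_herm rho_posdef KM_sa dualM_eigen_norm Y.
Qed.

Lemma sandwich_spectrum : spectrum_in01 (fun X => M (N (M X))).
Proof.
move=> mu X; rewrite -[X](sgamma_invK s rho_herm rho_posdef).
move: (sgamma_inv rho s X) => Y; rewrite sgamma_eq0 // -sgamma_sandwich -linearZ.
move=> Y_neq0 /(can_inj (sgammaK s rho_herm rho_posdef)) eigY.
have [/andP[ge0 le] le'] := sandwich_dual_form Y.
have Y_gt0 := sinner_gt0 s rho_herm rho_posdef Y_neq0.
rewrite eigY sinnerZr in ge0 le.
by rewrite -(pmulr_lge0 _ Y_gt0) ge0 -(ger_pMl _ Y_gt0) (le_trans le le').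
Qed.

Lemma sandwich_fixed_dual Y :
  DM (DN (DM Y)) = Y -> DN (DM Y) = DM Y /\ DM (DM Y) = Y.
Proof.
move=> fixY.
(* <Y, Y> = <DM Y, DN (DM Y)> <= <DM Y, DM Y> <= <Y, Y> *)
have [/andP[_ le1] eq1] := selfadjoint_form_le rho_herm rho_posdef KN_sa dualN_eigen01 (DM Y).
have [le2 eq2] := selfadjoint_form_contraction rho_herm rho_posdef KM_sa dualM_eigen_norm Y.
have e : << Y, Y >> = << DM Y, DN (DM Y) >> by rewrite -KM_sa fixY.
by split; [apply: eq1; rewrite -e | apply: eq2; rewrite e].
Qed.

Lemma sandwich_unique_fixed_point :
  unique_fixed_point N rho -> unique_fixed_point (fun X => M (N (M X))) rho.
Proof.
move=> [rho_state [N_rho N_uniq]].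
split=> //; split=> [|tau]; first by rewrite M_fixes_rho N_rho M_fixes_rho.
rewrite -[tau](sgamma_invK s rho_herm rho_posdef); move: (sgamma_inv rho s tau) => Y.
move=> [_ tr_Y]; rewrite -sgamma_sandwich => /(can_inj (sgammaK s rho_herm rho_posdef)).
move=> /sandwich_fixed_dual [DN_fix DM2].
have KN_unique : unique_fixed_point (kraus_map KN) rho.
  by split=> //; split=> [|sigma]; rewrite -N_kraus //; apply: N_uniq.
have [a Ga] : exists a, sgamma rho s (DM Y) = a *: rho.
  apply: (unique_fixed_point_scalar rho_posdef KN_unique) => [X|].
    exact: kraus_map_dag.
  by rewrite /= -(sgamma_kraus_dual KN_sa) DN_fix.
have DMY : DM Y = a *: 1%:M.
  apply: (can_inj (sgammaK s rho_herm rho_posdef)).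
  by rewrite Ga sgamma_scalar.
have Y1 : Y = a *: 1%:M by rewrite -DM2 DMY linearZ /= kraus_dual1.
have tau_rho : sgamma rho s Y = a *: rho by rewrite Y1 sgamma_scalar.
have a1 : a = 1 by move: tr_Y; rewrite tau_rho mxtraceZ rho_state.2 mulr1.
by rewrite tau_rho a1 scale1r.
Qed.

End SandwichChannel.

Section Gibbs.
Variables (R : realType) (k : nat) (beta : R) (H : 'M[R[i]]_k).
Local Notation E := (mxexp (- (beta%:C)%C *: H)).

Lemma gibbs_hermitian : gibbs beta H \is hermsymmx.
Proof.
have tr_real : \tr E \is Num.real.
  by rewrite mxtrace_hermfun rpred_sum // => i _; apply/complex_realP; eexists.
have := hermfun_hermitian (- (beta%:C)%C *: H) expR; rewrite hermitianE => /eqP dagE.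
rewrite hermitianE /gibbs dagZ dagE; apply/eqP; congr (_ *: _).
by rewrite fmorphV; congr (_^-1); apply: conj_Creal.
Qed.

Lemma gibbs_posdef : posdefmx (gibbs beta H).
Proof.
move=> v v_neq0; have E_pos := hermfun_posdef _ (@expR_gt0 R) v_neq0.
rewrite /gibbs -scalemxAr dotmxZl; apply: mulr_gt0; last exact: E_pos.
have [i _] : exists i, v 0 i != 0.
  apply/existsP; apply: contraR v_neq0 => /existsPn v0; apply/eqP/rowP => i.
  by rewrite mxE; apply/eqP; have := v0 i; rewrite negbK.
rewrite invr_gt0 mxtrace_hermfun (bigD1 i) //= ltr_wpDr ?ltcE /= ?eqxx ?expR_gt0 //.
by apply: sumr_ge0 => j _; rewrite ler0c ltW ?expR_gt0.
Qed.

End Gibbs.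

Theorem lemma4p1 (R : realType) (n : nat) (H : 'M[R[i]]_(2 ^ n)) (beta s : R)
  (M N : 'M[R[i]]_(2 ^ n) -> 'M[R[i]]_(2 ^ n)) :
  H \is hermsymmx -> 0 < beta -> 0 <= s <= 1 ->
  is_channel M -> is_channel N ->
  detailed_balance s (gibbs beta H) M ->
  detailed_balance s (gibbs beta H) N ->
  detailed_balance s (gibbs beta H) (fun X => M (N (M X))) /\
  (unique_fixed_point N (gibbs beta H) -> spectrum_in01 N ->
   unique_fixed_point (fun X => M (N (M X))) (gibbs beta H) /\
   spectrum_in01 (fun X => M (N (M X)))).
Proof.
move=> _ _ _ chM chN dbM dbN; split; first exact: detailed_balance_sandwich dbM dbN.
have [KM [KM_tp M_kraus KM_sa]] := channel_detailed_balance_kraus chM dbM.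
have [KN [_ N_kraus KN_sa]] := channel_detailed_balance_kraus chN dbN.
have rho_herm := gibbs_hermitian beta H; have rho_posdef := gibbs_posdef beta H.
move=> N_unique N_spec; split.
  exact: (sandwich_unique_fixed_point (s := s) rho_herm rho_posdef KM_tp M_kraus N_kraus
            KM_sa KN_sa N_spec N_unique).
exact: (sandwich_spectrum (s := s) rho_herm rho_posdef KM_tp M_kraus N_kraus KM_sa KN_sa N_spec).
Qed.
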